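(* Let $G$ be a graph, and let $(G',L,\alpha,\beta)$ be constructed from $G$ as described in the context. Let $\gamma$ be any $L$-coloring of $G'$ and let $uv\in E(G)$. If $\gamma(u)=\gamma(v)$ then $\gamma(z_{uv})=4$. If $\gamma(u)\ne\gamma(v)$, then there exists an $L$-recoloring sequence of length bounded by an absolute constant from $\gamma$ to an $L$-coloring $\gamma'$ with $\gamma'(z_{uv})\ne 4$ and $\gamma'(w)=\gamma(w)$ for all $w\in (V(G)\cup Z)\setminus\{z_{uv}\}$.
   Context: A color list assignment $L$ gives each vertex a list $L(v)\subseteq[4]=\{1,2,3,4\}$. An $L$-coloring is a proper coloring $\gamma$ with $\gamma(v)\in L(v)$ for all $v$. $\mathcal{C}(G,L)$ is the graph on $L$-colorings, two adjacent iff they differ on exactly one vertex; an $L$-recoloring sequence of length $m$ is a sequence $\gamma_0,\ldots,\gamma_m$ of $L$-colorings with consecutive ones equal or adjacent in $\mathcal{C}(G,L)$. $(a,b)$-forbidding path: for $a,b\in[4]$, a path $P$ with lists $L(x)\subseteq[4]$ and end vertices $u,v$ is $(a,b)$-forbidding from $u$ to $v$ if (i) for all $x\in L(u)$, $y\in L(v)$, there is an $L$-coloring $\gamma$ of $P$ with $\gamma(u)=x,\gamma(v)=y$ iff $x\ne a$ or $y\ne b$ (such $(x,y)$ are called admissible); and (ii) for any $L$-coloring $\gamma$ of $P$ and any admissible $(x,y)$ with $x=\gamma(u)$ or $y=\gamma(v)$, there is an $L$-recoloring sequence of $P$ from $\gamma$ to an $L$-coloring $\delta$ with $\delta(u)=x,\delta(v)=y$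 in which each internal vertex is recolored at most once and $u,v$ are not recolored until the last step. Such paths of length six exist whenever $L(u),L(v)\ne[4]$, $a\in L(u)$, $b\in L(v)$. Construction of $G'$: start with $V(G)$ (no edges among these), each $u\in V(G)$ with $L(u)=\{1,2,3\}$, $\alpha(u)=1$. For every edge $uv\in E(G)$ (with a fixed orientation $u,v$), add new vertices $x_{uv},y_{uv},z_{uv}$ with $\alpha$-value $4$ each and $L(x_{uv})=\{1,2,4\}$, $L(y_{uv})=\{3,4\}$, $L(z_{uv})=\{1,2,4\}$; add edges $ux_{uv}$, $uy_{uv}$; and add (each with its own new internal vertices, each of length six) a $(1,2)$-forbidding and a $(3,1)$-forbidding path from $u$ to $x_{uv}$, a $(2,3)$-forbidding path from $u$ to $y_{uv}$, a $(2,1)$-forbidding and a $(3,2)$-forbidding path from $v$ to $x_{uv}$, a $(1,3)$-forbidding path from $v$ to $y_{uv}$, a $(4,1)$-forbidding path from $x_{uv}$ to $z_{uv}$, and a $(4,2)$-forbidding path from $y_{uv}$ to $z_{uv}$. Let $Z=\{z_{uv}\mid uv\in E(G)\}$. Add vertices $a,b,c,d$ with $\alpha(a)=1,\alpha(b)=2,\alpha(c)=3,\alpha(d)=4$, $L(a)=\{1,2,3\}$, $L(b)=\{1,2\}$, $L(c)=\{3,4\}$, $L(d)=\{4\}$, all edges among $a,b,c,d$ except $cd$, and edges from every vertex of $Z$ to $c$. Extend $\alpha$ arbitrarily to an $L$-coloring of all internal vertices of the forbidding paths (possible since the end colors are admissible). Set $\beta(w)=\alpha(w)$ for all $w\ne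 a,b$, $\beta(a)=2$, $\beta(b)=1$. *)

From mathcomp Require Import all_boot.
Set Implicit Arguments. Unset Strict Implicit. Unset Printing Implicit Defensive.

Fixpoint recseq (C : Type) (P : C -> Prop) (step : C -> C -> Prop)
    (x : C) (s : seq C) : Prop :=
  match s with
  | [::] => True
  | y :: s' => [/\ P y, step x y & recseq P step y s']
  end.

Definition pcol (Ls : nat -> seq nat) (c : nat -> nat) : Prop :=
  (forall j, j < 7 -> c j \in Ls j) /\ (forall j, j < 6 -> c j != c j.+1).

Definition pstep (c c' : nat -> nat) : Prop :=
  forall i j, i < 7 -> j < 7 -> c i != c' i -> c j != c' j -> i = j.

Fixpoint nchanges (j : nat) (x : nat -> nat) (s : seq (nat -> nat)) : nat :=
  match s with
  | [::] => 0
  | y :: s' => (x j != y j) + nchanges j y s'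
  end.

Definition forbidding (Ls : nat -> seq nat) (a b : nat) : Prop :=
  (forall x y, x \in Ls 0 -> y \in Ls 6 ->
     ((exists c, [/\ pcol Ls c, c 0 = x & c 6 = y]) <-> ((x != a) || (y != b))))
  /\
  (forall (g : nat -> nat) x y, pcol Ls g -> x \in Ls 0 -> y \in Ls 6 ->
     (x != a) || (y != b) -> (x = g 0 \/ y = g 6) ->
     exists s : seq (nat -> nat),
       [/\ recseq (pcol Ls) pstep g s,
           (last g s) 0 = x, (last g s) 6 = y,
           (forall j, 0 < j < 6 -> nchanges j g s <= 1) &
           (* u,v are not recolored before the last step: all colorings of the
              sequence except the last one agree with g on the end vertices *)
           (forall i, i < size s ->
              (nth g (g :: s) i) 0 = g 0 /\ (nth g (g :: s) i) 6 = g 6)]).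

(* Vertices of G': V = vertices of G, A = (oriented) edges of G,
   gP e k i = i-th internal vertex of the k-th forbidding path of edge e. *)
Inductive gvert (V A : Type) : Type :=
| gV of V
| gX of A
| gY of A
| gZ of A
| gP of A & 'I_8 & 'I_5
| ga | gb | gc | gd.

Arguments ga {V A}. Arguments gb {V A}. Arguments gc {V A}. Arguments gd {V A}.
Arguments gV {V A}. Arguments gX {V A}. Arguments gY {V A}. Arguments gZ {V A}.
Arguments gP {V A}.

Section G'.
Variables (V : finType) (arc : rel V).
Definition arcT := {p : V * V | arc p.1 p.2}.
Definition vtx := gvert V arcT.

Definition tailv (e : arcT) : V := (val e).1.
Definition headv (e : arcT) : V := (val e).2.

(* The eight forbidding paths of the gadget of e = uv:
   0: (1,2) u -> x   1: (3,1) u -> x   2: (2,3) u -> y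
   3: (2,1) v -> x   4: (3,2) v -> x   5: (1,3) v -> y
   6: (4,1) x -> z   7: (4,2) y -> z *)
Definition pstart (e : arcT) (k : 'I_8) : vtx :=
  match val k with
  | 0 | 1 | 2 => gV (tailv e)
  | 3 | 4 | 5 => gV (headv e)
  | 6 => gX e
  | _ => gY e
  end.
Definition pend (e : arcT) (k : 'I_8) : vtx :=
  match val k with
  | 0 | 1 | 3 | 4 => gX e
  | 2 | 5 => gY e
  | _ => gZ e
  end.
Definition fa (k : 'I_8) : nat :=
  match val k with 0 => 1 | 1 => 3 | 2 => 2 | 3 => 2 | 4 => 3 | 5 => 1 | _ => 4 end.
Definition fb (k : 'I_8) : nat :=
  match val k with 0 => 2 | 1 => 1 | 2 => 3 | 3 => 1 | 4 => 2 | 5 => 3 | 6 => 1 | _ => 2 end.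

Definition pv (e : arcT) (k : 'I_8) (j : nat) : vtx :=
  if j == 0 then pstart e k
  else if j < 6 then gP e k (inord j.-1)
  else pend e k.

Definition Lst (Lint : arcT -> 'I_8 -> 'I_5 -> seq nat) (w : vtx) : seq nat :=
  match w with
  | gV _ => [:: 1; 2; 3]
  | gX _ => [:: 1; 2; 4]
  | gY _ => [:: 3; 4]
  | gZ _ => [:: 1; 2; 4]
  | gP e k i => Lint e k i
  | ga => [:: 1; 2; 3]
  | gb => [:: 1; 2]
  | gc => [:: 3; 4]
  | gd => [:: 4]
  end.

Definition base_edge (w1 w2 : vtx) : Prop :=
  (exists e : arcT, w1 = gV (tailv e) /\ (w2 = gX e \/ w2 = gY e))
  \/ (exists e k j, [/\ j < 6, w1 = pv e k j & w2 = pv e k j.+1])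
  \/ (exists e : arcT, w1 = gZ e /\ w2 = gc)
  \/ (w1 = ga /\ (w2 = gb \/ w2 = gc \/ w2 = gd))
  \/ (w1 = gb /\ (w2 = gc \/ w2 = gd)).

Definition adj (w1 w2 : vtx) : Prop := base_edge w1 w2 \/ base_edge w2 w1.

Definition Lcol (Lint : arcT -> 'I_8 -> 'I_5 -> seq nat) (g : vtx -> nat) : Prop :=
  (forall w, g w \in Lst Lint w) /\ (forall w1 w2, adj w1 w2 -> g w1 != g w2).

(* equal or adjacent in C(G',L): differ on at most one vertex *)
Definition gstep (g g' : vtx -> nat) : Prop :=
  forall w1 w2, g w1 != g' w1 -> g w2 != g' w2 -> w1 = w2.

End G'.

(* If u and v have the same color, the constraints imposed by the eight forbidding
   paths of the gadget of uv leave 4 as the only color of z_uv (a finite check).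
   Otherwise z_uv is freed by recoloring two terminals of the gadget: y to 3 and then
   z_uv to 2 when u has color 1, and x and then z_uv to 1 otherwise.  A terminal w of a
   gadget is recolored to t in two phases.  First, property (ii) of each of the eight
   forbidding paths, applied towards the new end colors, moves the interior of the path
   in at most five steps so that the neighbour of w on the path avoids t, while the ends
   stay fixed; then w itself is recolored.  This costs at most 8 * 5 + 1 = 41 steps per
   terminal, hence 82 in total. *)

From HB Require Import structures.
From mathcomp Require Import all_boot zify.
From Stdlib Require Import FunctionalExtensionality.
Set Implicit Arguments. Unset Strict Implicit. Unset Printing Implicit Defensive.

Section RecolorSequences.
Variables (C : Type) (P : C -> Prop) (step : C -> C -> Prop).

Lemma recseq_cat x s1 s2 :
  recseq P step x s1 -> recseq P step (last x s1) s2 -> recseq P step x (s1 ++ s2).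
Proof. by elim: s1 x => [|y s IH] x //= [? ? ?] ?; split => //; apply: IH. Qed.

Lemma recseq_rcons x s y :
  recseq P step x (rcons s y) <-> [/\ recseq P step x s, P y & step (last x s) y].
Proof.
elim: s x => [|z s IH] x /=; first by split=> [[]|[]].
split=> [[? ? /IH[]] //|[[? ? ?] ? ?]].
by split => //; apply/IH.
Qed.

Lemma recseq_last x s : recseq P step x s -> P x -> P (last x s).
Proof. by elim: s x => [|y s IH] x //= [? ? ?] _; apply: IH. Qed.

Lemma recseq_and (Q : C -> Prop) x s :
  recseq P step x s -> (forall i, i < size s -> Q (nth x s i)) ->
  recseq (fun y => P y /\ Q y) step x s.
Proof.
elim: s x => [|y s IH] x //= [Py sxy rs] HQ; split => //; first exact: conj Py (HQ 0 isT).
by apply: IH => // i lti; rewrite (set_nth_default x) //; exact: (HQ i.+1 lti).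
Qed.

Lemma recseq_map (D : Type) (Q : D -> Prop) (stepD : D -> D -> Prop) (f : C -> D) x s :
  (forall y, P y -> Q (f y)) -> (forall y z, step y z -> stepD (f y) (f z)) ->
  recseq P step x s -> recseq Q stepD (f x) (map f s).
Proof.
by move=> PQ sf; elim: s x => [|y s IH] x //= [Py sxy rs]; split; [apply: PQ|apply: sf|apply: IH].
Qed.

End RecolorSequences.

Lemma pstep_eq_left (x y z : nat -> nat) :
  (forall j, j < 7 -> y j = x j) -> pstep y z -> pstep x z.
Proof. by move=> yx syz i j hi hj; rewrite -!yx //; exact: syz. Qed.

Definition changes (x : nat -> nat) (s : seq (nat -> nat)) : nat :=
  \sum_(j < 7) nchanges j x s.

Lemma changes_cons x y s : changes x (y :: s) = \sum_(j < 7) (x j != y j) + changes y s.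
Proof. by rewrite /changes -big_split. Qed.

Lemma recseq_pstep_squeeze (P : (nat -> nat) -> Prop) x s :
  recseq P pstep x s ->
  exists t, [/\ recseq P pstep x t, size t <= changes x s &
                forall j, j < 7 -> last x t j = last x s j].
Proof.
elim: s x => [|y s IH] x /=; first by exists [::].
case=> Py sxy /IH [t [rt st lt]]; rewrite changes_cons.
case: (boolP [exists j : 'I_7, x j != y j]) => [/existsP [j xyj]|/existsPn same].
  exists (y :: t); split => //=.
  by rewrite -add1n leq_add // (bigD1 j) //= xyj.
have yx j : j < 7 -> y j = x j by move=> hj; apply/esym/eqP/negbNE/(same (Ordinal hj)).
exists t; split.
- by case: t rt {st lt} => [|z t] //= [Pz syz rt]; split => //; exact: pstep_eq_left syz.
- by rewrite big1 ?add0n // => j _; rewrite (negbTE (same j)).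
- by move=> j hj; rewrite -lt //; case: (t) => //=; rewrite yx.
Qed.

Lemma nchanges_rcons j x s y :
  nchanges j x (rcons s y) = nchanges j x s + (last x s j != y j).
Proof. by elim: s x => [|z s IH] x /=; rewrite ?addn0 // IH addnA. Qed.

Lemma nchanges_fixed (P : (nat -> nat) -> Prop) step j c x s :
  (forall y, P y -> y j = c j) -> x j = c j -> recseq P step x s -> nchanges j x s = 0.
Proof.
move=> Pc; elim: s x => [|y s IH] x //= xc [Py _ rs].
by have yc := Pc y Py; rewrite xc yc eqxx (IH y).
Qed.

Definition pcol_fixing (Ls : nat -> seq nat) (c c' : nat -> nat) : Prop :=
  pcol Ls c' /\ (c' 0 = c 0 /\ c' 6 = c 6).

Lemma forbidding_prepare Ls a b c x y :
  forbidding Ls a b -> pcol Ls c -> x \in Ls 0 -> y \in Ls 6 ->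
  (x != a) || (y != b) -> x = c 0 \/ y = c 6 ->
  exists t, [/\ recseq (pcol_fixing Ls c) pstep c t, size t <= 5,
                last c t 1 != x & last c t 5 != y].
Proof.
move=> [_ reach] pc hx hy adm ends.
case: (boolP ((x == c 0) && (y == c 6))) => [/andP[/eqP-> /eqP->]|moved].
  by exists [::]; split => //=; [rewrite eq_sym; apply: (proj2 pc 0)|apply: (proj2 pc 5)].
have [s [rs ls0 ls6 nch pre]] := reach c x y pc hx hy adm ends.
case/lastP: s rs ls0 ls6 nch pre => [|s0 h].
  by move=> _ /= x0 y6; rewrite -x0 -y6 !eqxx in moved.
rewrite last_rcons size_rcons => /recseq_rcons [rs0 ph sth] h0 h6 nch pre.
have ends0 i : i <= size s0 -> nth c (c :: s0) i 0 = c 0 /\ nth c (c :: s0) i 6 = c 6.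
  by move=> hi; have := pre i; rewrite -rcons_cons nth_rcons /= !ltnS hi; apply.
have [l0 l6] : last c s0 0 = c 0 /\ last c s0 6 = c 6 by rewrite (last_nth c); exact: ends0.
have rs0' : recseq (pcol_fixing Ls c) pstep c s0.
  by apply: recseq_and rs0 _ => i lti; exact: (ends0 i.+1 lti).
(* the last step recolors an end vertex, so it leaves the interior alone *)
have interior j : 0 < j < 6 -> last c s0 j = h j.
  case/andP=> j0 j6; apply/eqP; apply: contraT => hj.
  have j7 : j < 7 by apply: ltnW.
  case/nandP: moved => [hx0|hy6].
    have := sth j 0 j7 isT hj; rewrite l0 h0 eq_sym => /(_ hx0) j_0.
    by rewrite j_0 in j0.
  have := sth j 6 j7 isT hj; rewrite l6 h6 eq_sym => /(_ hy6) j_6.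
  by rewrite j_6 in j6.
have [t [rt st lt]] := recseq_pstep_squeeze rs0'.
exists t; split => //.
- apply: leq_trans st _.
  have n0 : nchanges 0 c s0 = 0 by apply: nchanges_fixed rs0' => // z [_ []].
  have n6 : nchanges 6 c s0 = 0 by apply: nchanges_fixed rs0' => // z [_ []].
  have nj j : 0 < j < 6 -> nchanges j c s0 <= 1.
    by move/nch; rewrite nchanges_rcons; apply: leq_trans; rewrite leq_addr.
  rewrite /changes !big_ord_recr big_ord0 /= n0 n6.
  by have := nj 1 isT; have := nj 2 isT; have := nj 3 isT; have := nj 4 isT;
     have := nj 5 isT; lia.
- by rewrite lt // interior // -h0 eq_sym; apply: (proj2 ph 0).
- by rewrite lt // interior // -h6; apply: (proj2 ph 5).
Qed.

Section GvertEqType.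
Variables (V A : eqType).

Definition gvert_eqb (w w' : gvert V A) : bool :=
  match w, w' with
  | gV u, gV u' => u == u'
  | gX a, gX a' | gY a, gY a' | gZ a, gZ a' => a == a'
  | gP a k i, gP a' k' i' => [&& a == a', k == k' & i == i']
  | ga, ga | gb, gb | gc, gc | gd, gd => true
  | _, _ => false
  end.

Lemma gvert_eqP : Equality.axiom gvert_eqb.
Proof.
case=> [u|a|a|a|a k i| | | |] [u'|a'|a'|a'|a' k' i'| | | |] /=; try by constructor.
- by apply: (iffP eqP) => [->|[]].
- by apply: (iffP eqP) => [->|[]].
- by apply: (iffP eqP) => [->|[]].
- by apply: (iffP eqP) => [->|[]].
- by apply: (iffP and3P) => [[/eqP-> /eqP-> /eqP->]|[-> -> ->]].
Qed.

HB.instance Definition _ := hasDecEq.Build (gvert V A) gvert_eqP.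

End GvertEqType.

(* The end-color constraints of the eight forbidding paths of a gadget, in terms of
   the colors of u, v, x, y and z. *)
Definition gadget_ok (cu cv cx cy cz : nat) : bool :=
  [&& (cu, cx) != (1, 2), (cu, cx) != (3, 1), (cu, cy) != (2, 3),
      (cv, cx) != (2, 1), (cv, cx) != (3, 2), (cv, cy) != (1, 3),
      (cx, cz) != (4, 1) & (cy, cz) != (4, 2)].

Lemma gadget_ok_equal_ends cu cx cy cz :
  cu \in [:: 1; 2; 3] -> cx \in [:: 1; 2; 4] -> cy \in [:: 3; 4] -> cz \in [:: 1; 2; 4] ->
  cu != cx -> cu != cy -> gadget_ok cu cu cx cy cz -> cz = 4.
Proof. by rewrite !inE => /or3P[]/eqP-> /or3P[]/eqP-> /orP[]/eqP-> /or3P[]/eqP->. Qed.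

Lemma gadget_ok_escape cu cv cx cy :
  cu \in [:: 1; 2; 3] -> cv \in [:: 1; 2; 3] -> cx \in [:: 1; 2; 4] -> cy \in [:: 3; 4] ->
  cu != cv -> cu != cx -> cu != cy -> gadget_ok cu cv cx cy 4 ->
  [/\ cu != 3, gadget_ok cu cv cx 3 4 & gadget_ok cu cv cx 3 2] \/
  exists2 t, t \in [:: 1; 2] & [/\ cu != t, gadget_ok cu cv t cy 4 & gadget_ok cu cv t cy 1].
Proof.
rewrite !inE => /or3P[]/eqP-> /or3P[]/eqP-> /or3P[]/eqP-> /orP[]/eqP->;
  by [left | right; exists 1 | right; exists 2].
Qed.

Section Gadget.
Variables (V : finType) (arc : rel V) (Lint : arcT arc -> 'I_8 -> 'I_5 -> seq nat).
Notation vtx := (vtx arc).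
Notation arcT := (arcT arc).
Notation Lcol := (Lcol Lint).
Notation gstep := (@gstep V arc).
Implicit Types (g h : vtx -> nat) (e : arcT) (k : 'I_8) (w : vtx).

Definition internal w : bool := if w is gP _ _ _ then true else false.

Lemma pstart_external e k : ~~ internal (pstart e k).
Proof. by case: k => [[|[|[|[|[|[|[|m]]]]]]] ?]. Qed.

Lemma pend_external e k : ~~ internal (pend e k).
Proof. by case: k => [[|[|[|[|[|[|[|m]]]]]]] ?]. Qed.

Lemma pstart_neq_pend e k : pstart e k != pend e k.
Proof. by case: k => [[|[|[|[|[|[|[|m]]]]]]] ?]. Qed.

Lemma pv_internal e k j : internal (pv e k j) = (0 < j < 6).
Proof.
rewrite /pv; case: j => [|j] /=; first exact/negbTE/pstart_external.
by case: ifP => // _; exact/negbTE/pend_external.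
Qed.

Lemma interior_index j : 0 < j < 6 -> exists i : 'I_5, j = i.+1.
Proof. by case/andP=> j0 j6; exists (inord j.-1); rewrite inordK ?prednK // -ltnS prednK. Qed.

Lemma pvS e k (i : 'I_5) : pv e k i.+1 = gP e k i.
Proof. by rewrite /pv /= ltnS ltn_ord inord_val. Qed.

Definition plist e k (j : nat) : seq nat := Lst Lint (pv e k j).
Definition pcolor g e k (j : nat) : nat := g (pv e k j).

Lemma Lcol_pcol g e k : Lcol g -> pcol (plist e k) (pcolor g e k).
Proof.
case=> L A; split => [j _|j hj]; first exact: L.
by apply: A; left; right; left; exists e, k, j.
Qed.

Definition path_recolor g e k (c : nat -> nat) w : nat :=
  if w is gP e' k' i then (if (e' == e) && (k' == k) then c i.+1 else g w) else g w.

Definition on_path e k w : bool :=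
  if w is gP e' k' _ then (e' == e) && (k' == k) else false.

Lemma external_off_path e k w : ~~ internal w -> ~~ on_path e k w.
Proof. by case: w. Qed.

Lemma on_path_pv e k e' k' j : on_path e k (pv e' k' j) = [&& e' == e, k' == k & 0 < j < 6].
Proof.
case: (boolP (0 < j < 6)) => [/interior_index[i ->]|]; first by rewrite pvS /= andbT.
by rewrite -(pv_internal e' k') => /(external_off_path e k)/negbTE->; rewrite !andbF.
Qed.

Lemma path_recolor_off g e k c w : ~~ on_path e k w -> path_recolor g e k c w = g w.
Proof. by case: w => //= e' k' i /negbTE->. Qed.

Lemma path_recolor_pv g e k c j : 0 < j < 6 -> path_recolor g e k c (pv e k j) = c j.
Proof. by case/interior_index=> i ->; rewrite pvS /= !eqxx. Qed.

Lemma path_recolor_on_path g e k c j : j <= 6 ->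
  c 0 = g (pv e k 0) -> c 6 = g (pv e k 6) -> path_recolor g e k c (pv e k j) = c j.
Proof.
move=> j6 c0 c6; case: (boolP (0 < j < 6)) => [|/negbTE int]; first exact: path_recolor_pv.
rewrite path_recolor_off ?on_path_pv ?int ?andbF //.
by case: j j6 int => [|j] j6 /=; [rewrite c0|case: ltnP => // j5; have -> : j = 5 by lia].
Qed.

Lemma Lcol_path_recolor g e k c :
  Lcol g -> pcol_fixing (plist e k) (pcolor g e k) c -> Lcol (path_recolor g e k c).
Proof.
move=> [L A] [[pL pA] [c0 c6]]; split.
  case=> [u|a|a|a|e' k' i| | | |] /=; try exact: L.
  case: ifP => [/andP[/eqP-> /eqP->]|_]; last exact: L.
  by have := pL i.+1; rewrite /plist pvS ltnS => /(_ (ltnW (ltn_ord i))).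
suff B w1 w2 : base_edge w1 w2 -> path_recolor g e k c w1 != path_recolor g e k c w2.
  by move=> w1 w2 [/B|/B] //; rewrite eq_sym.
move=> b; case: (boolP (internal w1 || internal w2)) => [int|]; last first.
  by rewrite negb_or => /andP[n1 n2]; rewrite !path_recolor_off ?external_off_path //; apply: A; left.
case: b int => [[e' [-> [->|->]]] | [[e' [k' [j [j6 -> ->]]]] | [[e' [-> ->]] |
  [[-> [->|[->|->]]] | [-> [->|->]]]]]] //= _.
case: (boolP ((e' == e) && (k' == k))) => [/andP[/eqP-> /eqP->]|ne].
  by rewrite !path_recolor_on_path //; [apply: pA | apply: ltnW].
rewrite !path_recolor_off ?on_path_pv ?andbA ?(negbTE ne) //.
by apply: A; left; right; left; exists e', k', j.
Qed.

Lemma gstep_path_recolor g e k c c' :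
  pstep c c' -> gstep (path_recolor g e k c) (path_recolor g e k c').
Proof.
move=> ps; have diff w : path_recolor g e k c w != path_recolor g e k c' w ->
    exists i : 'I_5, w = gP e k i /\ c i.+1 != c' i.+1.
  case: w => //= [u|a|a|a|e' k' i| | | |]; rewrite ?eqxx //.
  by case: ifP => [/andP[/eqP-> /eqP->] cc'|_]; [exists i|rewrite eqxx].
move=> w1 w2 /diff [i [-> ci]] /diff [i' [-> ci']].
have := ps i.+1 i'.+1; rewrite !ltnS => /(_ (ltnW (ltn_ord i)) (ltnW (ltn_ord i')) ci ci').
by case=> /val_inj->.
Qed.

Lemma path_recolor_id g e k : path_recolor g e k (pcolor g e k) = g.
Proof.
apply: functional_extensionality; case=> //= e' k' i.
by case: ifP => // /andP[/eqP-> /eqP->]; rewrite /pcolor pvS.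
Qed.

Hypothesis forb : forall e k, forbidding (plist e k) (fa k) (fb k).

Definition ends_admissible h e : Prop :=
  forall k, (h (pstart e k) != fa k) || (h (pend e k) != fb k).

Lemma Lcol_ends_admissible g e : Lcol g -> ends_admissible g e.
Proof.
move=> Lg k; have [colorable _] := forb e k; have pc := Lcol_pcol e k Lg.
apply/(colorable (g (pstart e k)) (g (pend e k)) (pc.1 0 isT) (pc.1 6 isT)).
by exists (pcolor g e k).
Qed.

Lemma ends_admissibleE h e : ends_admissible h e <->
  gadget_ok (h (gV (tailv e))) (h (gV (headv e))) (h (gX e)) (h (gY e)) (h (gZ e)).
Proof.
rewrite /gadget_ok !xpair_eqE !negb_and; split => [adm|].
  by rewrite (adm (Ordinal (isT : 0 < 8))) (adm (Ordinal (isT : 1 < 8)))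
    (adm (Ordinal (isT : 2 < 8))) (adm (Ordinal (isT : 3 < 8))) (adm (Ordinal (isT : 4 < 8)))
    (adm (Ordinal (isT : 5 < 8))) (adm (Ordinal (isT : 6 < 8))) (adm (Ordinal (isT : 7 < 8))).
case/and3P=> ? ? /and3P[? ? /and3P[? ? /andP[? ?]]].
by case=> -[|[|[|[|[|[|[|[|//]]]]]]]] ?.
Qed.

Lemma ends_admissible_ext h h' e : (forall w, ~~ internal w -> h w = h' w) ->
  ends_admissible h e -> ends_admissible h' e.
Proof. by move=> hh' adm k; rewrite -!hh' ?pstart_external ?pend_external. Qed.

Lemma prepare_path g h e k : Lcol g ->
  h (pstart e k) \in Lst Lint (pstart e k) -> h (pend e k) \in Lst Lint (pend e k) ->
  (h (pstart e k) != fa k) || (h (pend e k) != fb k) ->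
  h (pstart e k) = g (pstart e k) \/ h (pend e k) = g (pend e k) ->
  exists s, [/\ recseq Lcol gstep g s, size s <= 5,
    last g s (pv e k 1) != h (pstart e k), last g s (pv e k 5) != h (pend e k) &
    forall w, ~~ on_path e k w -> last g s w = g w].
Proof.
move=> Lg hs he adm either.
have [t [rt st t1 t5]] := forbidding_prepare (forb e k) (Lcol_pcol e k Lg) hs he adm either.
have lastE : last g (map (path_recolor g e k) t) = path_recolor g e k (last (pcolor g e k) t).
  by rewrite -{1}(path_recolor_id g e k) last_map.
exists (map (path_recolor g e k) t); rewrite size_map lastE !path_recolor_pv //; split => //.
- rewrite -{1}(path_recolor_id g e k); apply: recseq_map rt => [c|c c']; last exact: gstep_path_recolor.
  exact: Lcol_path_recolor.
- by move=> w; apply: path_recolor_off.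
Qed.

Lemma prepare_paths g h e (ks : seq 'I_8) : Lcol g -> uniq ks ->
  (forall w, ~~ internal w -> h w \in Lst Lint w) -> ends_admissible h e ->
  (forall k, h (pstart e k) = g (pstart e k) \/ h (pend e k) = g (pend e k)) ->
  exists s, [/\ recseq Lcol gstep g s, size s <= 5 * size ks,
    forall k, k \in ks ->
      last g s (pv e k 1) != h (pstart e k) /\ last g s (pv e k 5) != h (pend e k) &
    forall w, (forall k, k \in ks -> ~~ on_path e k w) -> last g s w = g w].
Proof.
move=> + + hL adm; elim: ks g => [|k ks IH] g Lg; first by exists [::].
rewrite cons_uniq => /andP[kks uks] either.
have [s1 [r1 st1 s1_1 s1_5 off1]] := prepare_path Lg (hL _ (pstart_external e k))
  (hL _ (pend_external e k)) (adm k) (either k).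
have Lg1 : Lcol (last g s1) by apply: recseq_last r1 Lg.
have ext1 w : ~~ internal w -> last g s1 w = g w.
  by move=> hw; apply/off1/external_off_path.
have either1 k' : h (pstart e k') = last g s1 (pstart e k') \/ h (pend e k') = last g s1 (pend e k').
  by rewrite !ext1 ?pstart_external ?pend_external.
have [s2 [r2 st2 ready2 off2]] := IH _ Lg1 uks either1.
have off_k j : (forall k', k' \in ks -> ~~ on_path e k' (pv e k j)).
  by move=> k' k'ks; rewrite on_path_pv eqxx /=; apply: contraNN kks => /andP[/eqP-> _].
exists (s1 ++ s2); rewrite last_cat; split.
- exact: recseq_cat.
- by rewrite size_cat mulnS leq_add.
- move=> k'; rewrite inE => /predU1P[->|/ready2 //].
  by rewrite !off2; try exact: off_k; split.
- move=> w off; rewrite off2 => [|k' k'ks]; first by rewrite off1 //; apply/off/mem_head.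
  by apply/off; rewrite inE k'ks orbT.
Qed.

Definition setv g w0 (t : nat) w : nat := if w == w0 then t else g w.

Lemma Lcol_setv g w0 t : Lcol g -> t \in Lst Lint w0 ->
  (forall w, adj w w0 -> g w != t) -> Lcol (setv g w0 t).
Proof.
move=> [L A] ht N; split=> [w|w1 w2 a]; rewrite /setv; first by case: eqP => [->|].
case: (eqVneq w1 w0) => [E1|n1]; case: (eqVneq w2 w0) => [E2|n2].
- by have := A _ _ a; rewrite E1 E2 eqxx.
- by rewrite eq_sym; apply: N; rewrite -E1; case: a; [right|left].
- by apply: N; rewrite -E2.
- exact: A.
Qed.

Lemma gstep_setv g w0 t : gstep g (setv g w0 t).
Proof.
move=> w1 w2; rewrite /setv; case: (eqVneq w1 w0) => [->|_]; last by rewrite eqxx.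
by case: (eqVneq w2 w0) => [->|_] //; rewrite eqxx.
Qed.

Definition terminal e w0 : bool := w0 \in [:: gX e; gY e; gZ e].

(* The only neighbour of a terminal that lies outside the forbidding paths. *)
Definition anchor e w0 : vtx := if w0 == gZ e then gc else gV (tailv e).

Lemma anchor_external e w0 : ~~ internal (anchor e w0).
Proof. by rewrite /anchor; case: ifP. Qed.

Lemma terminal_external e w0 : terminal e w0 -> ~~ internal w0.
Proof. by rewrite /terminal !inE => /or3P[]/eqP->. Qed.

Lemma terminal_path_end e e' k w0 :
  terminal e w0 -> w0 = pstart e' k \/ w0 = pend e' k -> e' = e.
Proof.
rewrite /terminal => + ends; case: ends => ->;
  by case: k => [[|[|[|[|[|[|[|m]]]]]]] ?]; rewrite /pstart /pend !inE //= ?orbF => /eqP[].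
Qed.

Lemma terminal_internal_neighbor e w0 w : terminal e w0 -> adj w w0 -> internal w ->
  exists k, (w = pv e k 1 /\ w0 = pstart e k) \/ (w = pv e k 5 /\ w0 = pend e k).
Proof.
move=> tw0 a; have := terminal_external tw0; move: tw0.
case: a => -[[e' [-> [->|->]]] | [[e' [k [j [j6 -> ->]]]] | [[e' [-> ->]] |
  [[-> [->|[->|->]]] | [-> [->|->]]]]]] //; rewrite !pv_internal => tw0 jw0 jw.
- have j5 : j = 5 by lia.
  subst j; exists k; right.
  by rewrite (terminal_path_end (e' := e') (k := k) tw0 (or_intror erefl)).
- have j0 : j = 0 by lia.
  subst j; exists k; left.
  by rewrite (terminal_path_end (e' := e') (k := k) tw0 (or_introl erefl)).
Qed.

Lemma terminal_external_neighbor e w0 w : terminal e w0 -> adj w w0 -> ~~ internal w ->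
  w = anchor e w0.
Proof.
move=> tw0 a; have := terminal_external tw0; move: tw0; rewrite /terminal /anchor.
case: a => -[[e' [-> [->|->]]] | [[e' [k [j [j6 -> ->]]]] | [[e' [-> ->]] |
  [[-> [->|[->|->]]] | [-> [->|->]]]]]]; rewrite !inE //= ?orbF ?pv_internal;
  by [move=> _ *; lia | case/eqP=> -> | case/eqP=> ->; rewrite eqxx].
Qed.

Lemma recolor_terminal g e w0 (t : nat) : Lcol g -> terminal e w0 -> t \in Lst Lint w0 ->
  g (anchor e w0) != t -> ends_admissible (setv g w0 t) e ->
  exists s, [/\ recseq Lcol gstep g s, size s <= 41 &
                forall w, ~~ internal w -> last g s w = setv g w0 t w].
Proof.
move=> Lg tw0 ht anc adm.
have hL w : ~~ internal w -> setv g w0 t w \in Lst Lint w.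
  by move=> _; rewrite /setv; case: eqP => [->|_] //; exact: Lg.1.
have either k :
    setv g w0 t (pstart e k) = g (pstart e k) \/ setv g w0 t (pend e k) = g (pend e k).
  rewrite /setv; case: (eqVneq (pstart e k) w0) => [<-|_]; last by left.
  by right; rewrite eq_sym (negbTE (pstart_neq_pend e k)).
have [s [rs st ready off]] := prepare_paths Lg (enum_uniq 'I_8) hL adm either.
have ext w : ~~ internal w -> last g s w = g w.
  by move=> hw; apply: off => k _; apply: external_off_path.
exists (rcons s (setv (last g s) w0 t)); rewrite last_rcons; split.
- rewrite -cats1; apply: recseq_cat => //=; split => //; last exact: gstep_setv.
  apply: Lcol_setv (recseq_last rs Lg) ht _ => w a.
  case: (boolP (internal w)) => [iw|ew]; last first.
    by rewrite ext // (terminal_external_neighbor tw0 a ew).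
  have [k [[-> E]|[-> E]]] := terminal_internal_neighbor tw0 a iw;
    have [ready1 ready5] := ready k (mem_enum _ k); by rewrite /setv -E eqxx in ready1 ready5.
- by rewrite size_rcons ltnS (leq_trans st) // size_enum_ord.
- by move=> w hw; rewrite /setv; case: eqP => // _; rewrite ext.
Qed.

Lemma recolor_terminal_twice g e w1 t1 w2 t2 : Lcol g -> terminal e w1 -> terminal e w2 ->
  t1 \in Lst Lint w1 -> t2 \in Lst Lint w2 ->
  g (anchor e w1) != t1 -> setv g w1 t1 (anchor e w2) != t2 ->
  ends_admissible (setv g w1 t1) e -> ends_admissible (setv (setv g w1 t1) w2 t2) e ->
  exists s, [/\ recseq Lcol gstep g s, size s <= 82 &
                forall w, ~~ internal w -> last g s w = setv (setv g w1 t1) w2 t2 w].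
Proof.
move=> Lg tw1 tw2 ht1 ht2 anc1 anc2 adm1 adm2.
have [s1 [rs1 st1 ext1]] := recolor_terminal Lg tw1 ht1 anc1 adm1.
have same w : ~~ internal w -> setv (setv g w1 t1) w2 t2 w = setv (last g s1) w2 t2 w.
  by move=> hw; rewrite /setv ext1.
have anc2' : last g s1 (anchor e w2) != t2 by rewrite ext1 ?anchor_external.
have [s2 [rs2 st2 ext2]] :=
  recolor_terminal (recseq_last rs1 Lg) tw2 ht2 anc2' (ends_admissible_ext same adm2).
exists (s1 ++ s2); rewrite last_cat size_cat; split.
- exact: recseq_cat.
- by rewrite -[82]/(41 + 41) leq_add.
- by move=> w hw; rewrite ext2 // same.
Qed.

Lemma gZ_eq e f : (gZ f == gZ e :> vtx) = (f == e).
Proof. by []. Qed.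

Theorem gadget_recoloring g e : Lcol g ->
  (g (gV (tailv e)) = g (gV (headv e)) -> g (gZ e) = 4) /\
  (g (gV (tailv e)) != g (gV (headv e)) ->
   exists s, [/\ recseq Lcol gstep g s, size s <= 82, last g s (gZ e) != 4,
     forall u, last g s (gV u) = g (gV u) &
     forall f, f <> e -> last g s (gZ f) = g (gZ f)]).
Proof.
move=> Lg; have [L A] := Lg.
have ok := proj1 (ends_admissibleE g e) (Lcol_ends_admissible e Lg).
have ux : g (gV (tailv e)) != g (gX e) by apply: A; left; left; exists e; split; [|left].
have uy : g (gV (tailv e)) != g (gY e) by apply: A; left; left; exists e; split; [|right].
have zc : g (gZ e) != g gc by apply: A; left; right; right; left; exists e.
have := L (gV (tailv e)); have := L (gV (headv e)); have := L (gX e); have := L (gY e);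
have := L (gZ e); have := L gc => /= Lc Lz Ly Lx Lv Lu.
split=> [uv|uv]; first by apply: (gadget_ok_equal_ends Lu Lx Ly Lz ux uy); rewrite {2}uv.
have [z4|z4] := eqVneq (g (gZ e)) 4; last by exists [::].
have c3 : g gc = 3 by move: Lc zc; rewrite z4 !inE => /orP[]/eqP-> //=.
rewrite z4 in ok.
suff [w1 [t1 [t2 [w1xy t24 [s [rs st ext]]]]]] : exists w1 t1 t2,
    [/\ w1 \in [:: gX e; gY e], t2 != 4 & exists s, [/\ recseq Lcol gstep g s, size s <= 82 &
      forall w, ~~ internal w -> last g s w = setv (setv g w1 t1) (gZ e) t2 w]].
  have kept w : ~~ internal w -> w != gZ e -> w \notin [:: gX e; gY e] -> last g s w = g w.
    move=> hw wz ww1; rewrite ext // /setv (negbTE wz) ifN //.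
    by apply: contraNneq ww1 => ->.
  exists s; split => //; first by rewrite ext // /setv eqxx.
    by move=> u; apply: kept; rewrite ?inE.
  by move=> f /eqP fe; apply: kept; rewrite ?inE ?gZ_eq.
case: (gadget_ok_escape Lu Lv Lx Ly uv ux uy ok) => [[u3 ok1 ok2]|[t t12 [ut ok1 ok2]]].
- exists (gY e), 3, 2; split=> //; first by rewrite !inE eqxx orbT.
  apply: (@recolor_terminal_twice g e) => //; rewrite ?/terminal ?inE ?eqxx ?orbT //.
  + by rewrite /anchor eqxx /setv /= c3.
  + by apply/ends_admissibleE; rewrite /setv /= eqxx z4.
  + by apply/ends_admissibleE; rewrite /setv /= !eqxx.
- exists (gX e), t, 1; split=> //; first by rewrite !inE eqxx.
  apply: (@recolor_terminal_twice g e) => //; rewrite ?/terminal ?inE ?eqxx ?orbT //.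
  + by move: t12; rewrite !inE => /orP[]/eqP->.
  + by rewrite /anchor eqxx /setv /= c3.
  + by apply/ends_admissibleE; rewrite /setv /= eqxx z4.
  + by apply/ends_admissibleE; rewrite /setv /= !eqxx.
Qed.

End Gadget.

Theorem mainTheorem6 :
  exists C : nat,
  forall (V : finType) (arc : rel V)
         (Lint : arcT arc -> 'I_8 -> 'I_5 -> seq nat),
    (forall u, ~~ arc u u) ->
    (forall u v, arc u v -> ~~ arc v u) ->
    (forall e k i x, x \in Lint e k i -> x \in [:: 1; 2; 3; 4]) ->
    (forall e k, forbidding (fun j => Lst Lint (pv e k j)) (fa k) (fb k)) ->
  forall (g : vtx arc -> nat) (e : arcT arc),
    Lcol Lint g ->
    (g (gV (tailv e)) = g (gV (headv e)) -> g (gZ e) = 4) /\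
    (g (gV (tailv e)) != g (gV (headv e)) ->
     exists s : seq (vtx arc -> nat),
       [/\ recseq (Lcol Lint) (@gstep V arc) g s,
           size s <= C,
           (last g s) (gZ e) != 4,
           (forall u : V, (last g s) (gV u) = g (gV u)) &
           (forall f : arcT arc, f <> e -> (last g s) (gZ f) = g (gZ f))]).
Proof.
exists 82 => V arc Lint _ _ _ forb g e.
exact: gadget_recoloring.
Qed.
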